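(* Let $S_n$ be the star on $n$ vertices with edge set $E$, let $f=\{i,j\}\notin E$ be a pair of distinct vertices, and let $B=E\cup\{f\}$. Let $\det(xI-\mathfrak{D}_2(S_n)[B,B])=\sum_{k=0}^n a_kx^k$ and let $|a_t|=\max_k|a_k|$. Then $\lfloor\frac{n-2}{2}\rfloor\le t\le\lceil\frac n2\rceil$.
   Context: For a tree $T$, let $\mathcal{V}_2$ be the set of 2-element vertex subsets (edges regarded as elements of $\mathcal{V}_2$). The 2-Steiner distance matrix $\mathfrak{D}_2(T)$ is indexed by $\mathcal{V}_2$, with entry in row $\{i,j\}$, column $\{k,l\}$ equal to the minimum number of edges of a connected subtree of $T$ whose vertex set contains $i,j,k,l$. $M[B,B]$ denotes the principal submatrix with rows and columns indexed by $B$. *)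

From HB Require Import structures.
From mathcomp Require Import all_boot all_order all_algebra.
Set Implicit Arguments. Unset Strict Implicit. Unset Printing Implicit Defensive.
Import Order.TTheory GRing.Theory Num.Theory.

(* A simple graph on a finType T is an edge relation e : rel T
   (intended symmetric and irreflexive). *)

Definition induced_connected (T : finType) (e : rel T) (S : {set T}) : bool :=
  [forall x in S, forall y in S,
     connect (fun a b => [&& e a b, a \in S & b \in S]) x y].

Definition induced_edges (T : finType) (e : rel T) (S : {set T}) : nat :=
  #|[set p : T * T | [&& e p.1 p.2, p.1 \in S, p.2 \in S & enum_rank p.1 < enum_rank p.2]]|.

(* Steiner distance of a vertex set W in a tree: the minimum number of edges
   of a connected subtree whose vertex set contains W.  (Connected subtrees of
   a tree are exactly the induced subgraphs on connected vertex sets.) *)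
Definition steiner_dist (T : finType) (e : rel T) (W : {set T}) : nat :=
  \big[minn/#|T|]_(S : {set T} | (W \subset S) && induced_connected e S)
     induced_edges e S.

Definition star_rel (n : nat) (c : 'I_n) : rel 'I_n :=
  fun x y => (x != y) && ((x == c) || (y == c)).

Definition edge_set (T : finType) (e : rel T) : {set {set T}} :=
  [set [set p.1; p.2] | p in [set p : T * T | e p.1 p.2]].

(* Principal submatrix D_2(T)[B,B] of the 2-Steiner distance matrix, rows and
   columns indexed by B listed in the order of enum B (the characteristic
   polynomial does not depend on this order). *)
Definition steiner2_submx (T : finType) (e : rel T) (B : {set {set T}}) :
  'M[int]_(#|B|) :=
  \matrix_(a < #|B|, b < #|B|)
    (steiner_dist e (nth set0 (enum B) a :|: nth set0 (enum B) b) : int).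

(* Between two members S, T of B the 2-Steiner distance in the star is
   |(S :|: T) :\ c|, so D + I = L R for an n x 3 matrix L whose columns are the
   all-ones vector and the indicators of the non-edge f and of the two spokes
   ci, cj.  By Sylvester's determinant identity, det (xI - D) is
   (x + 1)^(n-3) times the cubic det ((x + 1) I - R L) =
   x^3 - 2(n-1) x^2 - 7(n-2) x - (n-1).  Hence minus the k-th coefficient is
   (n-1) C(n-3,k) + 7(n-2) C(n-3,k-1) + 2(n-1) C(n-3,k-2) - C(n-3,k-3); by the
   unimodality of binomial coefficients it is nonnegative below the top degree,
   strictly increasing while 2k + 1 <= n - 3 and strictly decreasing once
   2k >= n + 2, while the leading coefficient 1 is beaten by n + 1. *)

From HB Require Import structures.
From mathcomp Require Import all_boot all_order all_algebra.
From mathcomp Require Import zify ring.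
Set Implicit Arguments. Unset Strict Implicit. Unset Printing Implicit Defensive.
Import Order.TTheory GRing.Theory Num.Theory.
Local Open Scope ring_scope.

Lemma det_sylvester (R : comNzRingType) m k (U : 'M[R]_(m, k)) (V : 'M[R]_(k, m)) (y : R) :
  y ^+ k * \det (y%:M - U *m V) = y ^+ m * \det (y%:M - V *m U).
Proof.
pose Z := block_mx y%:M U V 1%:M : 'M[R]_(m + k).
have detZ : \det Z = \det (y%:M - U *m V).
  have -> : Z = block_mx 1%:M U 0 1%:M *m block_mx (y%:M - U *m V) 0 V 1%:M.
    by rewrite mulmx_block !mul1mx !mul0mx !mulmx1 ?add0r ?addr0 subrK.
  by rewrite det_mulmx det_ublock det_lblock !det1 !mul1r mulr1.
have := congr1 determinant (_ : block_mx 1%:M 0 (- V) y%:M *m Z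
                                = block_mx y%:M U 0 (y%:M - V *m U)).
rewrite det_mulmx det_ublock det_lblock det1 mul1r detZ !det_scalar => -> //.
rewrite mulmx_block !mul1mx !mul0mx !mulmx1 !addr0 mulNmx mul_mx_scalar.
by rewrite mul_scalar_mx addNr addrC mulNmx.
Qed.

Lemma det_mx33 (R : comNzRingType) (F : nat -> nat -> R) :
  \det (\matrix_(a < 3, b < 3) F a b) =
  F 0 0 * (F 1 1 * F 2 2 - F 1 2 * F 2 1)
  - F 0 1 * (F 1 0 * F 2 2 - F 1 2 * F 2 0)
  + F 0 2 * (F 1 0 * F 2 1 - F 1 1 * F 2 0).
Proof.
rewrite (expand_det_row _ 0) !big_ord_recl big_ord0 /cofactor.
rewrite !(expand_det_row _ 0) !big_ord_recl !big_ord0 /cofactor !det_mx11 !mxE /=.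
by rewrite /bump /=; ring.
Qed.

Definition binz (s : nat) (z : int) : int := if z is Posz k then 'C(s, k)%:Z else 0.

Lemma binz0 s : binz s 0 = 1.
Proof. exact: (congr1 Posz (bin0 s)). Qed.

Lemma binz1 s : binz s 1 = s%:Z.
Proof. exact: (congr1 Posz (bin1 s)). Qed.

Lemma binzz s : binz s s%:Z = 1.
Proof. exact: (congr1 Posz (binn s)). Qed.

Lemma binz_lt0 s z : z < 0 -> binz s z = 0.
Proof. by case: z. Qed.

Lemma binz_ge0 s z : 0 <= binz s z.
Proof. by case: z. Qed.

Lemma binz_small s z : s%:Z < z -> binz s z = 0.
Proof. by case: z => // k; rewrite ltz_nat => /bin_small /= ->. Qed.

Lemma binz_gt0 s z : 0 <= z -> z <= s%:Z -> 0 < binz s z.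
Proof. by case: z => // k _; rewrite lez_nat ltz_nat bin_gt0. Qed.

Lemma mul_binz s z : 1 <= z -> z * binz s z = (s%:Z - z + 1) * binz s (z - 1).
Proof.
case: z => // -[|k] // _; rewrite /= subn1 /=.
have [le_ks|lt_sk] := leqP k s; last by rewrite !bin_small ?mulr0 //; lia.
have -> : s%:Z - k.+1%:Z + 1 = (s - k)%N by lia.
by rewrite -!PoszM mul_bin_left.
Qed.

Lemma binz_sub s x y : x + y = s%:Z -> binz s x = binz s y.
Proof.
move=> xy; have [x_lt0|x_ge0] := ltrP x 0.
  by rewrite binz_lt0 // binz_small //; lia.
have [s_lt_x|x_le_s] := ltrP s%:Z x.
  by rewrite binz_small // binz_lt0 //; lia.
case: x x_ge0 x_le_s xy => // k _; rewrite lez_nat => le_ks xy.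
have -> : y = (s - k)%N by lia.
by rewrite /binz bin_sub.
Qed.

Lemma binz_pred_le s z : 2 * z <= s%:Z + 1 -> binz s (z - 1) <= binz s z.
Proof.
move=> le_2z_s; have [z_lt1|z_ge1] := ltrP z 1.
  by rewrite binz_lt0 ?binz_ge0 //; lia.
have := @mul_binz s z z_ge1; have := binz_ge0 s (z - 1).
move: (binz s z) (binz s (z - 1)) => b b' b'_ge0 eq_b; nia.
Qed.

Lemma binz_pred_lt_diff s k : 0 <= k -> 2 * k + 1 <= s%:Z ->
  binz s (k - 1) < (s%:Z + 1) * (binz s k - binz s (k - 1)).
Proof.
move=> k_ge0 le_2k_s; have [k_lt1|k_ge1] := ltrP k 1.
  have -> : k = 0 by lia.
  by rewrite binz_lt0 // subr0 binz0; lia.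
have := @mul_binz s k k_ge1; have := @binz_gt0 s (k - 1) ltac:(lia) ltac:(lia).
have := @binz_pred_le s k ltac:(lia).
move: (binz s k) (binz s (k - 1)) => b b' le_b'b b'_gt0 eq_b.
have : 2 * b' <= k * (b - b') by nia.
nia.
Qed.

Lemma binz_succ_diff_lt s j : 1 <= j -> 2 * j <= s%:Z + 1 ->
  binz s (j + 1) - binz s j < 2 * (s%:Z + 2) * (binz s j - binz s (j - 1)).
Proof.
move=> j_ge1 le_2j_s.
have := @mul_binz s (j + 1) ltac:(lia); rewrite addrK.
have := @mul_binz s j j_ge1; have := @binz_gt0 s j ltac:(lia) ltac:(lia).
move: (binz s (j + 1)) (binz s j) (binz s (j - 1)) => b2 b1 b0 b1_gt0 eq_b1 eq_b2.
have pos : 0 < (j + 1) * (s%:Z - j + 1) by nia.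
rewrite -(ltr_pM2l pos).
have -> : (j + 1) * (s%:Z - j + 1) * (b2 - b1) = (s%:Z - j + 1) * (s%:Z - 2 * j - 1) * b1.
  transitivity ((s%:Z - j + 1) * ((j + 1) * b2) - (j + 1) * (s%:Z - j + 1) * b1); first ring.
  by rewrite eq_b2; ring.
have -> : (j + 1) * (s%:Z - j + 1) * (2 * (s%:Z + 2) * (b1 - b0))
        = 2 * (s%:Z + 2) * (j + 1) * (s%:Z - 2 * j + 1) * b1.
  transitivity (2 * (s%:Z + 2) * (j + 1) * ((s%:Z - j + 1) * b1 - (s%:Z - j + 1) * b0)).
    by ring.
  by rewrite -eq_b1; ring.
rewrite ltr_pM2r //; nia.
Qed.

Definition star_cubic (s : nat) : {poly int} :=
  'X^3 - (2 * (s + 2))%N%:R * 'X^2 - (7 * (s + 1))%N%:R * 'X - (s + 2)%N%:R.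

Definition star_charpoly (s : nat) : {poly int} := ('X + 1) ^+ s * star_cubic s.

Definition star_coefN (s : nat) (k : int) : int :=
  (s%:Z + 2) * binz s k + 7 * (s%:Z + 1) * binz s (k - 1)
  + 2 * (s%:Z + 2) * binz s (k - 2) - binz s (k - 3).

Lemma binz_subn s k d :
  binz s (k%:Z - d%:Z) = if (k < d)%N then 0 else 'C(s, k - d)%:Z.
Proof. by case: ltnP => [lt_kd|le_dk]; [rewrite binz_lt0 //; lia | rewrite subzn]. Qed.

Lemma coef_XaddC1_exp s k : (('X + 1) ^+ s : {poly int})`_k = 'C(s, k)%:Z.
Proof.
elim: s k => [|s IHs] k; first by rewrite expr0 coef1; case: k.
rewrite exprS mulrDl mul1r mulrC coefD coefMX !IHs.
by case: k => [|k] /=; rewrite ?add0r ?bin0 // binS PoszD addrC.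
Qed.

Lemma coef_star_charpoly s k : (star_charpoly s)`_k = - star_coefN s k%:Z.
Proof.
pose P : {poly int} := ('X + 1) ^+ s.
have -> : star_charpoly s = P * 'X^3 - (P * 'X^2) *+ (2 * (s + 2))
                             - (P * 'X^1) *+ (7 * (s + 1)) - P *+ (s + 2).
  by rewrite /star_charpoly /star_cubic -/P; ring.
rewrite !coefB !coefMn !coefMXn !coef_XaddC1_exp.
rewrite /star_coefN -[3]/(3%N%:Z) -[2]/(2%N%:Z) -[1]/(1%N%:Z) !binz_subn.
by rewrite /binz; ring.
Qed.

Lemma star_coefN_ge0 s k : 0 <= k -> k <= s%:Z + 2 -> 0 <= star_coefN s k.
Proof.
move=> k_ge0 k_le; rewrite /star_coefN.
have := binz_ge0 s k; have := binz_ge0 s (k - 1); have := binz_ge0 s (k - 2).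
have [k_lt3|k_ge3] := ltrP k 3.
  rewrite (@binz_lt0 s (k - 3)); last lia.
  move: (binz s k) (binz s (k - 1)) (binz s (k - 2)) => *; nia.
have := @mul_binz s (k - 2) ltac:(lia); rewrite (_ : k - 2 - 1 = k - 3); last ring.
have := binz_ge0 s (k - 3).
move: (binz s k) (binz s (k - 1)) (binz s (k - 2)) (binz s (k - 3)) => *; nia.
Qed.

Lemma star_coefN_lt_succ s k : 0 <= k -> 2 * k + 1 <= s%:Z ->
  star_coefN s k < star_coefN s (k + 1).
Proof.
move=> k_ge0 le_2k_s; rewrite /star_coefN addrK.
rewrite (_ : k + 1 - 2 = k - 1); last ring.
rewrite (_ : k + 1 - 3 = k - 2); last ring.
have := @binz_pred_le s (k + 1) ltac:(lia); rewrite addrK => le_10.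
have := @binz_pred_le s (k - 1) ltac:(lia); rewrite (_ : k - 1 - 1 = k - 2) => [le_32|]; last ring.
have := @binz_pred_le s (k - 2) ltac:(lia); rewrite (_ : k - 2 - 1 = k - 3) => [le_43|]; last ring.
have key := @binz_pred_lt_diff s k k_ge0 le_2k_s.
have ge0_4 := binz_ge0 s (k - 3).
move: (binz s (k + 1)) (binz s k) (binz s (k - 1)) (binz s (k - 2)) (binz s (k - 3))
  le_10 le_32 le_43 key ge0_4 => b0 b1 b2 b3 b4 le_10 le_32 le_43 key ge0_4.
have s2_ge0 : 0 <= s%:Z + 2 by lia.
have := ler_wpM2l s2_ge0 le_10; have := ler_wpM2l s2_ge0 le_32.
lia.
Qed.

Lemma star_coefN_reflect s j : star_coefN s (s%:Z + 3 - j) =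
  (s%:Z + 2) * binz s (j - 3) + 7 * (s%:Z + 1) * binz s (j - 2)
  + 2 * (s%:Z + 2) * binz s (j - 1) - binz s j.
Proof.
rewrite /star_coefN (@binz_sub s (s%:Z + 3 - j) (j - 3)); last ring.
rewrite (@binz_sub s (s%:Z + 3 - j - 1) (j - 2)); last ring.
rewrite (@binz_sub s (s%:Z + 3 - j - 2) (j - 1)); last ring.
by rewrite (@binz_sub s (s%:Z + 3 - j - 3) j); last ring.
Qed.

Lemma star_coefN_lt_pred s t : s%:Z + 5 <= 2 * t -> t <= s%:Z + 2 ->
  star_coefN s t < star_coefN s (t - 1).
Proof.
move=> le_s_2t le_t_s; set j := s%:Z + 3 - t.
have -> : t - 1 = s%:Z + 3 - (j + 1) by rewrite /j; ring.
have -> : t = s%:Z + 3 - j by rewrite /j; ring.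
rewrite !star_coefN_reflect addrK.
rewrite (_ : j + 1 - 2 = j - 1); last ring.
rewrite (_ : j + 1 - 3 = j - 2); last ring.
have key := @binz_succ_diff_lt s j ltac:(lia) ltac:(lia).
have := @binz_pred_le s (j - 1) ltac:(lia); rewrite (_ : j - 1 - 1 = j - 2) => [le_32|]; last ring.
have := @binz_pred_le s (j - 2) ltac:(lia); rewrite (_ : j - 2 - 1 = j - 3) => [le_43|]; last ring.
move: (binz s (j + 1)) (binz s j) (binz s (j - 1)) (binz s (j - 2)) (binz s (j - 3))
  key le_32 le_43 => b0 b1 b2 b3 b4 key le_32 le_43.
have s2_ge0 : 0 <= s%:Z + 2 by lia.
have s1_ge0 : 0 <= s%:Z + 1 by lia.
have := ler_wpM2l s2_ge0 le_43; have := ler_wpM2l s1_ge0 le_32.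
lia.
Qed.

Lemma star_coefN_top s : star_coefN s (s%:Z + 3) = -1.
Proof.
rewrite /star_coefN (@binz_small s (s%:Z + 3)); last lia.
rewrite (@binz_small s (s%:Z + 3 - 1)); last lia.
rewrite (@binz_small s (s%:Z + 3 - 2)); last lia.
rewrite (_ : s%:Z + 3 - 3 = s%:Z) ?binzz; last ring.
ring.
Qed.

Lemma star_coefN_top_pred s : star_coefN s (s%:Z + 2) = s%:Z + 4.
Proof.
rewrite /star_coefN (@binz_sub s (s%:Z + 2 - 3) 1) ?binz1; last ring.
rewrite (@binz_small s (s%:Z + 2)); last lia.
rewrite (@binz_small s (s%:Z + 2 - 1)); last lia.
rewrite (_ : s%:Z + 2 - 2 = s%:Z) ?binzz; last ring.
ring.
Qed.

Lemma abs_coef_star_charpoly s k : (k <= s + 2)%N ->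
  `|(star_charpoly s)`_k| = star_coefN s k%:Z.
Proof.
by move=> le_ks; rewrite coef_star_charpoly normrN ger0_norm // star_coefN_ge0 //; lia.
Qed.

Section StarCharpolyArgmax.
Variables s t : nat.
Let a := star_charpoly s.
Hypotheses (le_t : (t <= s + 3)%N)
  (t_max : forall k : nat, (k <= s + 3)%N -> `|a`_k| <= `|a`_t|).

Lemma star_charpoly_argmax_ge : ((s + 1)./2 <= t)%N.
Proof.
rewrite leqNgt; apply/negP => lt_t; have le_2t_s : (2 * t + 1 <= s)%N by lia.
have := @t_max t.+1 ltac:(lia); rewrite !abs_coef_star_charpoly; try lia.
have := @star_coefN_lt_succ s t%:Z ltac:(lia) ltac:(lia).
by rewrite (_ : t%:Z + 1 = t.+1%:Z) ?ltNge; [move/negP | lia].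
Qed.

Lemma star_charpoly_argmax_le : (t <= uphalf (s + 3))%N.
Proof.
rewrite leqNgt; apply/negP => gt_t.
have [t_eq|t_le] := eqVneq t (s + 3)%N.
  have := @t_max (s + 2)%N ltac:(lia).
  rewrite t_eq abs_coef_star_charpoly // coef_star_charpoly normrN.
  rewrite -[((s + 3)%N : int)]/(s%:Z + 3) star_coefN_top normrN1.
  by rewrite -[((s + 2)%N : int)]/(s%:Z + 2) star_coefN_top_pred; lia.
have := @t_max t.-1 ltac:(lia); rewrite !abs_coef_star_charpoly; try lia.
have := @star_coefN_lt_pred s t%:Z ltac:(lia) ltac:(lia).
by rewrite (_ : t%:Z - 1 = t.-1%:Z) ?ltNge; [move/negP | lia].
Qed.
End StarCharpolyArgmax.

Section StarSteinerDist.
Variables (n : nat) (c : 'I_n).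
Local Open Scope nat_scope.

Lemma star_induced_edges (S : {set 'I_n}) :
  c \in S -> induced_edges (star_rel c) S = #|S :\ c|.
Proof.
move=> cS.
pose edge_to (v : 'I_n) := if enum_rank c < enum_rank v then (c, v) else (v, c).
have inj : {in S :\ c &, injective edge_to}.
  move=> u v; rewrite !inE => /andP[uc _] /andP[vc _]; rewrite /edge_to.
  by case: ifP => _; case: ifP => _ [] // *; subst.
rewrite /induced_edges -(card_in_imset inj); apply: eq_card => -[x y]; rewrite inE /=.
apply/idP/imsetP.
- case/and4P => /andP[xy /orP[] /eqP e] xS yS r; subst.
  + by exists y; rewrite ?(inE, yS, eq_sym y) ?xy // /edge_to r.
  + by exists x; rewrite ?(inE, xS, xy) // /edge_to ltnNge ltnW.
- case=> v; rewrite !inE => /andP[vc vS]; rewrite /edge_to.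
  have rne : enum_rank c != enum_rank v by rewrite (inj_eq enum_rank_inj) eq_sym.
  case: ifP => r [-> ->]; rewrite /star_rel ?(eq_sym c) vc eqxx ?orbT cS vS //=.
  by rewrite ltn_neqAle eq_sym rne leqNgt r.
Qed.

Lemma star_connected_center (S : {set 'I_n}) (x y : 'I_n) :
  x \in S -> y \in S -> x != y -> induced_connected (star_rel c) S -> c \in S.
Proof.
move=> xS yS xy /forallP /(_ x) /implyP /(_ xS) /forallP /(_ y) /implyP /(_ yS).
case/connectP => -[|z p] /=; first by move=> _ e; rewrite e eqxx in xy.
by case/andP => /and3P[/andP[_ /orP[] /eqP <-]].
Qed.

Lemma star_connected_setU1 (W : {set 'I_n}) : induced_connected (star_rel c) (c |: W).
Proof.
pose e := fun a b => [&& star_rel c a b, a \in c |: W & b \in c |: W].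
have cS : c \in c |: W by rewrite setU11.
have to_c z : z \in c |: W -> connect e z c.
  case: (eqVneq z c) => [-> _|zc zS]; first exact: connect0.
  by apply: connect1; rewrite /e /star_rel zc eqxx orbT zS cS.
have from_c z : z \in c |: W -> connect e c z.
  case: (eqVneq z c) => [-> _|zc zS]; first exact: connect0.
  by apply: connect1; rewrite /e /star_rel eq_sym zc eqxx zS cS.
apply/forallP => x; apply/implyP => xS; apply/forallP => y; apply/implyP => yS.
exact: connect_trans (to_c x xS) (from_c y yS).
Qed.

Lemma star_steiner_dist (W : {set 'I_n}) (x y : 'I_n) :
  x \in W -> y \in W -> x != y -> steiner_dist (star_rel c) W = #|W :\ c|.
Proof.
move=> xW yW xy; apply/eqP; rewrite eqn_leq; apply/andP; split.
  have W_ok : (W \subset c |: W) && induced_connected (star_rel c) (c |: W).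
    by rewrite subsetUr star_connected_setU1.
  have := @bigmin_le_cond _ nat _ #|'I_n| (c |: W)
    (fun S => (W \subset S) && induced_connected (star_rel c) S) (induced_edges (star_rel c)) W_ok.
  rewrite minEnat star_induced_edges ?setU11 // setDUl setDv set0U.
  by move/leq_trans; apply.
apply: (big_ind (fun m => #|W :\ c| <= m)) => [|p q hp hq|S /andP[sWS cS]].
- exact: max_card.
- by rewrite leq_min hp hq.
- have cin := star_connected_center (subsetP sWS x xW) (subsetP sWS y yW) xy cS.
  by rewrite star_induced_edges // subset_leq_card // setSD.
Qed.

Lemma star_edge_setP S :
  reflect (exists2 u, u != c & S = [set c; u]) (S \in edge_set (star_rel c)).
Proof.
apply: (iffP imsetP) => [[[x y]]|[u uc ->]].
  rewrite inE /= /star_rel => /andP[xy /orP[] /eqP e] ->; subst.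
  + by exists y; rewrite // eq_sym.
  + by exists x; rewrite // setUC.
by exists (c, u); rewrite // inE /star_rel /= eq_sym uc eqxx.
Qed.

End StarSteinerDist.

Lemma eq_set2r (T : finType) (c u v : T) : ([set c; u] == [set c; v]) = (u == v).
Proof.
apply/eqP/eqP => [e|-> //].
have : u \in [set c; v] by rewrite -e !inE eqxx orbT.
have : v \in [set c; u] by rewrite e !inE eqxx orbT.
by rewrite !inE => /orP[/eqP->|/eqP->] /orP[/eqP|/eqP].
Qed.

Section StarPlusNonEdge.
Variables (n : nat) (c i j : 'I_n).
Hypotheses (neq_ij : i != j) (f_notin : [set i; j] \notin edge_set (star_rel c)).

Let f := [set i; j].
Let B := f |: edge_set (star_rel c).

Lemma i_neq_c : i != c.
Proof.
apply: contraNneq f_notin => eq_ic; apply/star_edge_setP; exists j; last by rewrite eq_ic.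
by rewrite -eq_ic eq_sym.
Qed.

Lemma j_neq_c : j != c.
Proof.
apply: contraNneq f_notin => eq_jc; apply/star_edge_setP; exists i; last by rewrite eq_jc setUC.
by rewrite -eq_jc.
Qed.

Lemma c_notin_f : c \notin f.
Proof. by rewrite !inE negb_or ![c == _]eq_sym i_neq_c j_neq_c. Qed.

Lemma three_le_n : (3 <= n)%N.
Proof.
have : (#|c |: f| <= n)%N by rewrite -[n in (_ <= n)%N]card_ord max_card.
by rewrite cardsU1 cards2 neq_ij c_notin_f.
Qed.

Lemma memB_cases S : S \in B -> S = f \/ exists2 u, u != c & S = [set c; u].
Proof. by rewrite in_setU1 => /orP[/eqP|/star_edge_setP]; [left | right]. Qed.

Lemma spoke_in_B u : u != c -> [set c; u] \in B.
Proof. by move=> uc; rewrite in_setU1; apply/orP; right; apply/star_edge_setP; exists u. Qed.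

Lemma spoke_neq_f u : ([set c; u] == f) = false.
Proof.
by apply/negbTE; apply: contraNneq c_notin_f => <-; rewrite setU11.
Qed.

Definition ind_f (S : {set 'I_n}) : int := (S == f)%:R.
Definition ind_ci_cj (S : {set 'I_n}) : int := ((S == [set c; i]) || (S == [set c; j]))%:R.

Lemma ind_f_f : ind_f f = 1.
Proof. by rewrite /ind_f eqxx. Qed.

Lemma ind_f_spoke u : ind_f [set c; u] = 0.
Proof. by rewrite /ind_f spoke_neq_f. Qed.

Lemma ind_ci_cj_f : ind_ci_cj f = 0.
Proof. by rewrite /ind_ci_cj eq_sym spoke_neq_f eq_sym spoke_neq_f. Qed.

Lemma ind_ci_cj_spoke u : ind_ci_cj [set c; u] = ((u == i) || (u == j))%:R.
Proof. by rewrite /ind_ci_cj !eq_set2r. Qed.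

Lemma steiner2_entry S T : S \in B -> T \in B ->
  #|(S :|: T) :\ c|%:Z + (S == T)%:R
  = 2 + ind_f T + ind_f S * (1 - ind_f T - ind_ci_cj T) - ind_ci_cj S * ind_f T.
Proof.
have fc : f :\ c = f.
  by apply/setDidPl; rewrite disjoint_sym disjoints1 c_notin_f.
have spoke_c u : u != c -> [set c; u] :\ c = [set u].
  move=> uc; rewrite setDUl setDv set0U.
  by apply/setDidPl; rewrite disjoint_sym disjoints1 inE eq_sym.
have card_f u : #|u |: f| = (2 + (u \notin f))%N by rewrite cardsU1 cards2 neq_ij addnC.
move=> /memB_cases [->|[u uc ->]] /memB_cases [->|[v vc ->]].
- by rewrite setUid fc eqxx cards2 neq_ij ind_f_f ind_ci_cj_f.
- rewrite eq_sym spoke_neq_f ind_f_f ind_f_spoke ind_ci_cj_spoke setDUl fc spoke_c //.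
  rewrite setUC card_f !inE.
  by case: (v == i); case: (v == j); rewrite /= ?mulr0 ?subr0.
- rewrite spoke_neq_f ind_f_f ind_f_spoke ind_ci_cj_spoke setDUl fc spoke_c //.
  rewrite card_f !inE.
  by case: (u == i); case: (u == j); rewrite /= ?mul0r ?mulr0 ?subr0.
- rewrite !ind_f_spoke eq_set2r setDUl !spoke_c // cardsU1 cards1 !inE.
  by rewrite mul0r mulr0 !subr0; case: (eqVneq u v).
Qed.

Lemma card_B : #|B| = n.
Proof.
pose edge_of (v : 'I_n) := if v == c then f else [set c; v].
have inj : injective edge_of.
  move=> u v; rewrite /edge_of.
  case: (eqVneq u c) => [->|uc]; case: (eqVneq v c) => [->|vc] //.
  - by move/eqP; rewrite eq_sym spoke_neq_f.
  - by move/eqP; rewrite spoke_neq_f.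
  - by move/eqP; rewrite eq_set2r => /eqP.
have -> : B = edge_of @: [set: 'I_n].
  apply/setP => S; apply/idP/imsetP => [/memB_cases [->|[u uc ->]]|[v _ ->]].
  - by exists c; rewrite /edge_of ?eqxx.
  - by exists u; rewrite /edge_of ?(negbTE uc).
  - by rewrite /edge_of; case: eqVneq => [_|vc]; [rewrite setU11 | exact: spoke_in_B].
by rewrite card_imset // cardsT card_ord.
Qed.

Let N := #|B|.
Let idx (a : 'I_N) := nth set0 (enum B) a.

Lemma idx_in a : idx a \in B.
Proof. by rewrite /idx -mem_enum mem_nth // -cardE. Qed.

Lemma eq_idx a b : (idx a == idx b) = (a == b).
Proof. by rewrite /idx nth_uniq ?enum_uniq // -?cardE. Qed.

Lemma sum_idx (F : {set 'I_n} -> int) : \sum_(a < N) F (idx a) = \sum_(S in B) F S.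
Proof. by rewrite [RHS]big_enum_val; apply: eq_bigr => a _; rewrite (enum_val_nth set0). Qed.

Let g a := ind_f (idx a).
Let h a := ind_ci_cj (idx a).

Definition steiner2_factorL : 'M[int]_(N, 3) :=
  \matrix_(a, k) [:: 1; g a; h a]`_k.
Definition steiner2_factorR : 'M[int]_(3, N) :=
  \matrix_(k, b) [:: 2 + g b; 1 - g b - h b; - g b]`_k.

Lemma steiner2_submx_add1 :
  steiner2_submx (star_rel c) B + 1%:M = steiner2_factorL *m steiner2_factorR.
Proof.
apply/matrixP => a b; rewrite !mxE -/(idx a) -/(idx b).
rewrite !big_ord_recl big_ord0 !mxE /=.
have [x [y]] : exists x y, [&& x \in idx a, y \in idx a & x != y].
  case/memB_cases: (idx_in a) => [->|[u uc ->]]; first by exists i, j; rewrite !inE !eqxx orbT.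
  by exists c, u; rewrite !inE !eqxx orbT eq_sym.
case/and3P => xa ya xy.
rewrite (@star_steiner_dist _ _ _ x y) ?inE ?xa ?ya //.
by rewrite -eq_idx steiner2_entry ?idx_in // /g /h; ring.
Qed.

Lemma ind_affine (P : int -> int -> int) b :
  P (g b) (h b) = P 0 0 + (P 1 0 - P 0 0) * g b + (P 0 1 - P 0 0) * h b.
Proof.
rewrite /g /h; case/memB_cases: (idx_in b) => [->|[u uc ->]].
  by rewrite ind_ci_cj_f ind_f_f; ring.
by rewrite ind_f_spoke ind_ci_cj_spoke; case: (_ || _); rewrite /=; ring.
Qed.

Lemma sum_g : \sum_(b < N) g b = 1.
Proof.
rewrite /g sum_idx (bigD1 f) ?setU11 //= big1 ?addr0 ?/ind_f ?eqxx //.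
by move=> S /andP[_ /negbTE ->].
Qed.

Lemma sum_h : \sum_(b < N) h b = 2.
Proof.
have neq_cj_ci : [set c; j] != [set c; i] by rewrite eq_set2r eq_sym.
rewrite /h sum_idx (bigD1 [set c; i]) ?spoke_in_B ?i_neq_c //=.
rewrite (bigD1 [set c; j]) ?spoke_in_B ?j_neq_c ?neq_cj_ci //= big1.
  by rewrite !ind_ci_cj_spoke !eqxx orbT.
by move=> S /andP[/andP[_ /negbTE S_ci] /negbTE S_cj]; rewrite /ind_ci_cj S_ci S_cj.
Qed.

Lemma sum_ind_affine (P : int -> int -> int) :
  \sum_(b < N) P (g b) (h b) = P 0 0 * n%:R + (P 1 0 - P 0 0) + 2 * (P 0 1 - P 0 0).
Proof.
under eq_bigr do rewrite ind_affine.
rewrite !big_split /= -!mulr_sumr sum_g sum_h sumr_const card_ord /N card_B -mulr_natr.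
ring.
Qed.

Definition steiner2_gram (k l : nat) : int :=
  let P (x y : int) := [:: 2 + x; 1 - x - y; - x]`_k * [:: 1; x; y]`_l in
  P 0 0 * n%:R + (P 1 0 - P 0 0) + 2 * (P 0 1 - P 0 0).

Lemma mulmx_steiner2_factorRL :
  steiner2_factorR *m steiner2_factorL = \matrix_(k < 3, l < 3) steiner2_gram k l.
Proof.
apply/matrixP => k l; rewrite !mxE.
pose P (x y : int) := [:: 2 + x; 1 - x - y; - x]`_k * [:: 1; x; y]`_l.
by rewrite (eq_bigr (fun b => P (g b) (h b))) ?sum_ind_affine // => b _; rewrite !mxE.
Qed.

Lemma char_poly_steiner2_star :
  char_poly (steiner2_submx (star_rel c) B) = star_charpoly (n - 3).
Proof.
set A := steiner2_submx _ _; set y : {poly int} := 'X + 1.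
have cpA : char_poly_mx A = y%:M - map_mx polyC (steiner2_factorL *m steiner2_factorR).
  rewrite -steiner2_submx_add1; apply/matrixP => a b; rewrite !mxE.
  by case: (a == b); rewrite /y /= ?polyCD ?mulr1n ?mulr0n ?polyC1 ?polyC0; ring.
have gramE : y%:M - map_mx polyC (\matrix_(k < 3, l < 3) steiner2_gram k l)
             = \matrix_(k < 3, l < 3) (y *+ (k == l :> nat) - (steiner2_gram k l)%:P).
  by apply/matrixP => k l; rewrite !mxE.
have := det_sylvester (map_mx polyC steiner2_factorL) (map_mx polyC steiner2_factorR) y.
rewrite -!map_mxM mulmx_steiner2_factorRL -cpA -/(char_poly A) gramE.
rewrite (det_mx33 (fun k l => y *+ (k == l) - (steiner2_gram k l)%:P)) /steiner2_gram /=.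
move: (char_poly A) => cp; rewrite /N card_B.
move: (n - 3)%N (subnK three_le_n) => s <-; rewrite exprD => sylv.
have y3_neq0 : y ^+ 3 != 0 by rewrite expf_neq0 // /y -polyC1 monic_neq0 ?monicXaddC.
by apply: (mulfI y3_neq0); rewrite sylv /star_charpoly /star_cubic /y; ring.
Qed.

End StarPlusNonEdge.

Theorem theorem5p4 (n : nat) (c i j : 'I_n) (t : nat) :
  i != j ->
  [set i; j] \notin edge_set (star_rel c) ->
  let B := [set i; j] |: edge_set (star_rel c) in
  let a := char_poly (steiner2_submx (star_rel c) B) in
  (t <= n)%N ->
  (forall k : nat, (k <= n)%N -> `|a`_k| <= `|a`_t|) ->
  ((n - 2)./2 <= t <= uphalf n)%N.
Proof.
move=> neq_ij f_notin B a le_tn t_max.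
have [s n_eq] : exists s, n = (s + 3)%N.
  by exists (n - 3)%N; rewrite subnK // (three_le_n neq_ij f_notin).
rewrite /a /B char_poly_steiner2_star // n_eq addnK in t_max.
rewrite n_eq in le_tn *; rewrite (_ : (s + 3 - 2 = s + 1)%N); last by rewrite -addnBA.
by rewrite (star_charpoly_argmax_ge le_tn t_max) (star_charpoly_argmax_le le_tn t_max).
Qed.
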